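(* Let $p\ge1$, let $\bm A\in\mathbb{R}^{m\times d}$, $\bm B\in\mathbb{R}^{n\times d}$ and $\bm V\in\mathbb{R}^{d\times k}$. Then \[d^p_{\mathrm{ERP}}(\bm A\bm V,\bm B\bm V)\le d^p_{\mathrm{ERP}}(\bm A,\bm B)\,\|\bm V\|_p.\] Moreover, if $\bm A,\bm B$ are sequences of one-hot vectors, then \[d^p_{\mathrm{ERP}}(\bm A\bm V,\bm B\bm V)\le d_{\mathrm{Lev}}(\bm A,\bm B)\cdot M(\bm V),\qquad M(\bm V)=\max\Big\{\max_{i\in\{1,\dots,d\}}\|\bm v_i\|_p,\ \max_{i,j\in\{1,\dots,d\}}\|\bm v_i-\bm v_j\|_p\Big\},\] where $\bm v_i$ is the $i$-th row of $\bm V$.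
   Context: $\bm A\bm V$ is the sequence with rows $\bm a_i\bm V$ (row vector times matrix), and $\|\bm V\|_p$ is the operator norm of $\bm x\mapsto\bm x\bm V$ induced by the $\ell_p$ norm. The ERP distance is defined recursively: $d^p_{\mathrm{ERP}}(\bm A,\emptyset)=\sum_{i}\|\bm a_i\|_p$, $d^p_{\mathrm{ERP}}(\emptyset,\bm B)=\sum_{i}\|\bm b_i\|_p$, and otherwise $d^p_{\mathrm{ERP}}(\bm A,\bm B)=\min\{\|\bm a_1\|_p+d^p_{\mathrm{ERP}}(\bm A_{2:},\bm B),\ \|\bm b_1\|_p+d^p_{\mathrm{ERP}}(\bm A,\bm B_{2:}),\ \|\bm a_1-\bm b_1\|_p+d^p_{\mathrm{ERP}}(\bm A_{2:},\bm B_{2:})\}$ ($\emptyset$ the empty sequence, $\bm A_{2:}$ removes the first row). One-hot vectors are vectors in $\{0,1\}^d$ with exactly one entry equal to $1$; $d_{\mathrm{Lev}}$ is the Levenshtein distance (minimum number of single-element insertions, deletions and substitutions). *)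

From HB Require Import structures.
From mathcomp Require Import all_boot all_order all_algebra.
From mathcomp Require Import classical_sets reals exp.
Set Implicit Arguments. Unset Strict Implicit. Unset Printing Implicit Defensive.
Import Order.TTheory GRing.Theory Num.Theory.
Local Open Scope ring_scope.
Local Open Scope classical_set_scope.

Section Defs.
Variable R : realType.

Definition lpnorm (p : R) {d : nat} (x : 'rV[R]_d) : R :=
  powR (\sum_(i < d) powR `|x 0 i| p) p^-1.

Definition opnorm (p : R) {d k : nat} (V : 'M[R]_(d, k)) : R :=
  sup [set lpnorm p (x *m V) | x in [set x : 'rV[R]_d | lpnorm p x <= 1]].

Definition rows {m d : nat} (A : 'M[R]_(m, d)) : seq 'rV[R]_d :=
  [seq row i A | i <- enum 'I_m].

Fixpoint erp (p : R) {d : nat} (A : seq 'rV[R]_d) : seq 'rV[R]_d -> R :=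
  match A with
  | [::] => fun B => \sum_(b <- B) lpnorm p b
  | a :: A' =>
      fix erpA (B : seq 'rV[R]_d) : R :=
        match B with
        | [::] => \sum_(x <- A) lpnorm p x
        | b :: B' =>
            Num.min (lpnorm p a + erp p A' B)
              (Num.min (lpnorm p b + erpA B') (lpnorm p (a - b) + erp p A' B'))
        end
  end.

Definition onehot {d : nat} (x : 'rV[R]_d) : bool :=
  [forall i, (x 0 i == 0) || (x 0 i == 1)] && (#|[set i | x 0 i == 1]| == 1%N).

Definition MV (p : R) {d k : nat} (V : 'M[R]_(d, k)) : R :=
  Num.max (\big[Num.max/0]_(i < d) lpnorm p (row i V))
          (\big[Num.max/0]_(i < d) \big[Num.max/0]_(j < d) lpnorm p (row i V - row j V)).

End Defs.

Fixpoint lev {T : eqType} (A : seq T) : seq T -> nat :=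
  match A with
  | [::] => fun B => size B
  | a :: A' =>
      fix levA (B : seq T) : nat :=
        match B with
        | [::] => size A
        | b :: B' => minn (lev A' B).+1 (minn (levA B').+1 (lev A' B' + (a != b)))
        end
  end.

(* Each branch of the ERP recursion adds the norm of a row or of a difference
   of rows.  Right multiplication by V maps a - b to aV - bV and multiplies
   every such norm by at most ||V||_p; as min is monotone, induction along the
   recursion scales the whole distance by ||V||_p.  For one-hot rows, aV is a
   row of V and aV - bV a difference of two rows of V, which vanishes when
   a = b: each gap or substitution costs at most M(V) and each match costs
   nothing, which is the Levenshtein recursion scaled by M(V). *)
From HB Require Import structures.
From mathcomp Require Import all_boot all_order all_algebra.
From mathcomp Require Import classical_sets reals exp.
Import Order.TTheory GRing.Theory Num.Theory.
Local Open Scope ring_scope.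

Section LpNorm.
Variables (R : realType) (p : R).
Hypothesis p_gt0 : 0 < p.

Let pinv_ge0 : 0 <= p^-1. Proof. by rewrite invr_ge0 ltW. Qed.

Lemma powRK (x : R) : 0 <= x -> (x `^ p) `^ p^-1 = x.
Proof. by move=> x_ge0; rewrite -powRrM mulfV ?gt_eqF // powRr1. Qed.

Lemma lpnorm_ge0 d (x : 'rV[R]_d) : 0 <= lpnorm p x.
Proof. exact: powR_ge0. Qed.

Lemma lpnormZ d (c : R) (x : 'rV[R]_d) : 0 <= c ->
  lpnorm p (c *: x) = c * lpnorm p x.
Proof.
move=> c_ge0; rewrite /lpnorm.
under eq_bigr => i _ do rewrite mxE normrM (ger0_norm c_ge0) powRM //.
rewrite -mulr_sumr powRM ?powR_ge0 ?sumr_ge0 ?powRK // => i _.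
exact: powR_ge0.
Qed.

Lemma lpnorm0 d : lpnorm p (0 : 'rV[R]_d) = 0.
Proof. by rewrite -(scale0r (0 : 'rV[R]_d)) lpnormZ // mul0r. Qed.

Lemma ler_coord_lpnorm d (x : 'rV[R]_d) i : `|x 0 i| <= lpnorm p x.
Proof.
rewrite -[leLHS](@powRK _ (normr_ge0 _)) /lpnorm.
have summand_ge0 j : 0 <= `|x 0 j| `^ p by exact: powR_ge0.
apply: ge0_ler_powR; rewrite ?nnegrE ?powR_ge0 ?sumr_ge0 //.
by rewrite (bigD1 i) //= lerDl sumr_ge0.
Qed.

Lemma lpnorm_eq0 d (x : 'rV[R]_d) : lpnorm p x = 0 -> x = 0.
Proof.
move=> x0; apply/rowP => i; apply/eqP; rewrite mxE -normr_le0 -x0.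
exact: ler_coord_lpnorm.
Qed.

Section OperatorNorm.
Variables (d k : nat) (V : 'M[R]_(d, k)).

Lemma opnorm_has_ubound :
  has_ubound [set lpnorm p (x *m V) | x in [set x | lpnorm p x <= 1]]%classic.
Proof.
exists ((\sum_(j < k) (\sum_(i < d) `|V i j|) `^ p) `^ p^-1).
move=> _ [x /= x_le1 <-].
have coord_le j : `|(x *m V) 0 j| <= \sum_(i < d) `|V i j|.
  rewrite mxE; apply: le_trans (ler_norm_sum _ _ _) _; apply: ler_sum => i _.
  rewrite normrM; apply: ler_piMl => //.
  exact: le_trans (ler_coord_lpnorm _ x i) x_le1.
have sum_powR_ge0 (F : 'I_k -> R) : 0 <= \sum_j F j `^ p.
  by apply: sumr_ge0 => j _; exact: powR_ge0.
apply: ge0_ler_powR; rewrite ?nnegrE ?sum_powR_ge0 //.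
apply: ler_sum => j _; apply: ge0_ler_powR; rewrite ?nnegrE ?sumr_ge0 //.
exact: ltW.
Qed.

Lemma lpnorm_mulmx_le1 (x : 'rV[R]_d) :
  lpnorm p x <= 1 -> lpnorm p (x *m V) <= opnorm p V.
Proof. by move=> x_le1; apply: ub_le_sup opnorm_has_ubound _ _; exists x. Qed.

Lemma opnorm_ge0 : 0 <= opnorm p V.
Proof. by rewrite -(lpnorm0 k) -(mul0mx _ V) lpnorm_mulmx_le1 // lpnorm0. Qed.

Lemma lpnorm_mulmx (x : 'rV[R]_d) : lpnorm p (x *m V) <= lpnorm p x * opnorm p V.
Proof.
have [/lpnorm_eq0 ->|x_neq0] := eqVneq (lpnorm p x) 0.
  by rewrite mul0mx !lpnorm0 mul0r.
have x_gt0 : 0 < lpnorm p x by rewrite lt_def x_neq0 lpnorm_ge0.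
have := @lpnorm_mulmx_le1 ((lpnorm p x)^-1 *: x).
rewrite -scalemxAl !lpnormZ ?invr_ge0 ?lpnorm_ge0 // mulVf // ler_pdivrMl //.
by apply.
Qed.

End OperatorNorm.
End LpNorm.

Lemma erp_cons (R : realType) (p : R) d (a b : 'rV[R]_d) (s t : seq 'rV[R]_d) :
  erp p (a :: s) (b :: t) =
  Num.min (lpnorm p a + erp p s (b :: t))
    (Num.min (lpnorm p b + erp p (a :: s) t) (lpnorm p (a - b) + erp p s t)).
Proof. by []. Qed.

Lemma lev_cons (T : eqType) (a b : T) (s t : seq T) :
  lev (a :: s) (b :: t) =
  minn (lev s (b :: t)).+1 (minn (lev (a :: s) t).+1 (lev s t + (a != b))).
Proof. by []. Qed.

Section ErpBounds.
Variables (R : realType) (p : R) (d k : nat).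
Implicit Types (s t : seq 'rV[R]_d) (f : 'rV[R]_d -> 'rV[R]_k).

Lemma erp_map_le (f : {additive 'rV[R]_d -> 'rV[R]_k}) c s t :
  0 <= c -> (forall a, lpnorm p (f a) <= lpnorm p a * c) ->
  erp p (map f s) (map f t) <= erp p s t * c.
Proof.
move=> c_ge0 f_le.
have sum_le u : \sum_(b <- map f u) lpnorm p b <= (\sum_(b <- u) lpnorm p b) * c.
  by rewrite big_map mulr_suml; apply: ler_sum => b _.
elim: s t => [|a s IHs] t; first exact: sum_le.
elim: t => [|b t IHt]; first exact: (sum_le (a :: s)).
rewrite [map f _]/= [map f (b :: t)]/= !erp_cons !minr_pMl // !mulrDl -raddfB.
apply: le_min2; [|apply: le_min2]; apply: lerD.
- exact: f_le.
- exact: (IHs (b :: t)).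
- exact: f_le.
- exact: IHt.
- exact: f_le.
- exact: (IHs t).
Qed.

Lemma erp_map_le_lev (P : pred 'rV[R]_d) f M s t :
  0 <= M -> (forall a, P a -> lpnorm p (f a) <= M) ->
  (forall a b, P a -> P b -> lpnorm p (f a - f b) <= (a != b)%:R * M) ->
  all P s -> all P t ->
  erp p (map f s) (map f t) <= (lev s t)%:R * M.
Proof.
move=> M_ge0 f_le f_sub_le.
have sum_le u : all P u -> \sum_(b <- map f u) lpnorm p b <= (size u)%:R * M.
  elim: u => [|a u IHu] /=; first by rewrite big_nil mul0r.
  by case/andP=> Pa Pu; rewrite big_cons -natr1 mulrDl mul1r addrC lerD ?f_le ?IHu.
elim: s t => [|a s IHs] t Ps Pt; first exact: sum_le.
elim: t Pt => [|b t IHt] Pt; first exact: (sum_le (a :: s)).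
case/andP: (Ps) (Pt) => Pa Ps' /andP[Pb Pt'].
rewrite [map f _]/= [map f (b :: t)]/= erp_cons lev_cons -!minEnat !natr_min.
rewrite !minr_pMl // -!natr1 natrD !mulrDl mul1r !(addrC _ M) (addrC (_ * M)).
apply: le_min2; [|apply: le_min2]; apply: lerD.
- exact: f_le.
- exact: (IHs (b :: t)).
- exact: f_le.
- exact: IHt.
- exact: f_sub_le.
- exact: (IHs t).
Qed.

End ErpBounds.

Section RowsAndOneHot.
Variable R : realType.

Lemma rows_mulmx m d k (A : 'M[R]_(m, d)) (V : 'M[R]_(d, k)) :
  rows (A *m V) = map (mulmxr V) (rows A).
Proof. by rewrite /rows; elim: (enum _) => //= i s ->; rewrite row_mul. Qed.

Lemma all_rows m d (P : pred 'rV[R]_d) (A : 'M[R]_(m, d)) :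
  (forall i, P (row i A)) -> all P (rows A).
Proof. by move=> PA; apply/allP => _ /mapP[i _ ->]. Qed.

Lemma onehotP d (x : 'rV[R]_d) : onehot x -> exists j, x = 'e_j.
Proof.
case/andP=> /forallP x01 /card1P[j Ej]; exists j; apply/rowP => i.
have {}Ej : (x 0 i == 1) = (i == j).
  by rewrite -[RHS]Ej; apply/idP/idP => [/mem_set|/set_mem].
rewrite !mxE eqxx -Ej /=; have := x01 i.
by case: (x 0 i =P 1) => [->|_] //; rewrite orbF => /eqP.
Qed.

Lemma lpnorm_row_le_MV p d k (V : 'M[R]_(d, k)) i : lpnorm p (row i V) <= MV p V.
Proof.
by rewrite le_max (le_bigmax 0 (fun i => lpnorm p (row i V)) i).
Qed.

Lemma lpnorm_row_sub_le_MV p d k (V : 'M[R]_(d, k)) i j :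
  lpnorm p (row i V - row j V) <= MV p V.
Proof.
rewrite le_max; apply/orP; right; apply: le_trans (le_bigmax 0 _ i).
exact: (le_bigmax 0 (fun j => lpnorm p (row i V - row j V)) j).
Qed.

Lemma MV_ge0 p d k (V : 'M[R]_(d, k)) : 0 <= MV p V.
Proof. by rewrite le_max bigmax_ge_id. Qed.

End RowsAndOneHot.

Theorem lemma4 (R : realType) (p : R) (m n d k : nat)
    (A : 'M[R]_(m, d)) (B : 'M[R]_(n, d)) (V : 'M[R]_(d, k)) :
  1 <= p ->
  erp p (rows (A *m V)) (rows (B *m V)) <= erp p (rows A) (rows B) * opnorm p V /\
  ((forall i, onehot (row i A)) -> (forall j, onehot (row j B)) ->
   erp p (rows (A *m V)) (rows (B *m V)) <= (lev (rows A) (rows B))%:R * MV p V).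
Proof.
move=> p_ge1; have p_gt0 : 0 < p := lt_le_trans ltr01 p_ge1.
rewrite !rows_mulmx; split.
  by apply: erp_map_le => [|a]; [exact: opnorm_ge0 | exact: lpnorm_mulmx].
move=> A_onehot B_onehot.
apply: (@erp_map_le_lev _ _ _ _ (@onehot R d)); rewrite ?MV_ge0 ?all_rows //.
  by move=> _ /onehotP[j ->]; rewrite /= -rowE lpnorm_row_le_MV.
move=> _ _ /onehotP[i ->] /onehotP[j ->].
have [->|_] := eqVneq ('e_i : 'rV[R]_d) 'e_j; first by rewrite subrr lpnorm0 ?mul0r.
by rewrite mul1r /= -!rowE lpnorm_row_sub_le_MV.
Qed.
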